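(* Let $R\subseteq S_n$ be a top-$k$ partial ranking with $n-k\ge2$, let $\sigma_0\in R$ be fixed, and let $\sigma$ be uniformly distributed on $R$. Put $X=d(\sigma,\sigma_0)$ and $Y=d(A_R(\sigma),\sigma_0)$. Then $\mathrm{Cov}(X,Y)<0$.
   Context: $S_n$ is the symmetric group on $[n]$; $\sigma\in S_n$ is identified with the full ranking $\sigma(1)\succ\cdots\succ\sigma(n)$. For distinct items $x,y$, $\{x,y\}$ is discordant for $\sigma,\tau$ if $(\sigma^{-1}(x)-\sigma^{-1}(y))(\tau^{-1}(x)-\tau^{-1}(y))<0$. The Kendall distance $d(\sigma,\tau)$ is the number of unordered discordant pairs. For $0\le k\le n$ and distinct $a_1,\dots,a_k\in[n]$, the top-$k$ partial ranking is the set $R=\{\sigma\in S_n:\sigma(i)=a_i,\ i\le k\}$ ($R=S_n$ when $k=0$). The antithetic operator $A_R:R\to R$ is $A_R(\sigma)(i)=a_i$ for $i\le k$ and $A_R(\sigma)(k+j)=\sigma(n+1-j)$ for $j=1,\dots,n-k$. *)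

From HB Require Import structures.
From mathcomp Require Import all_boot all_order all_algebra all_fingroup.
From Stdlib Require Import Lia.
Set Implicit Arguments. Unset Strict Implicit. Unset Printing Implicit Defensive.
Import Order.TTheory GRing.Theory Num.Theory.

(* A permutation s : 'S_n is the full ranking s(0) > s(1) > ... > s(n-1)
   (positions are 0-indexed): s maps positions to items, s^-1 maps items
   to positions. *)

Definition kendall n (s t : 'S_n) : nat :=
  #|[set p : 'I_n * 'I_n | (p.1 < p.2)%N &&
      ((((nat_of_ord ((s^-1)%g p.1))%:Z - (nat_of_ord ((s^-1)%g p.2))%:Z) *
        ((nat_of_ord ((t^-1)%g p.1))%:Z - (nat_of_ord ((t^-1)%g p.2))%:Z)) < 0)%R]|.

Definition topk n k (a : 'I_k -> 'I_n) : {set 'S_n} :=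
  [set s : 'S_n | [forall i : 'I_k, forall p : 'I_n,
                    (nat_of_ord p == nat_of_ord i) ==> (s p == a i)]].

Definition antipos n k (p : 'I_n) : 'I_n :=
  if (p < k)%N then p else insubd p (n + k - 1 - p)%N.

Lemma antipos_val n k (p : 'I_n) :
  nat_of_ord (antipos k p) = if (p < k)%N then nat_of_ord p else (n + k - 1 - p)%N.
Proof.
rewrite /antipos; case: ltnP => // kp.
rewrite val_insubd; case: ifP => // /negP; elim.
have := ltn_ord p => pn.
move/ssrnat.leP: kp => kp; move/ssrnat.ltP: pn => pn; apply/ssrnat.ltP.
rewrite -!minusE -plusE; lia.
Qed.

Lemma antipos_inj n k : injective (@antipos n k).
Proof.
move=> p q e0; apply: val_inj; change (nat_of_ord p = nat_of_ord q).
have e := congr1 val e0; rewrite /= !antipos_val in e.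
have := ltn_ord p; have := ltn_ord q. move: e.
case: (ltnP p k); case: (ltnP q k) => /ssrnat.leP h1 /ssrnat.leP h2 e /ssrnat.ltP h3 /ssrnat.ltP h4.
all: rewrite -?minusE -?plusE in e; try lia.
Qed.

Definition antiperm n k : 'S_n := perm (@antipos_inj n k).

(* Antithetic operator: A_R(s)(p) = s(antipos p).  For s in the top-k ranking
   R this is exactly the paper's A_R: A_R(s)(i) = a_i for i < k and
   A_R(s)(k+j) = s(n+1-j) (1-indexed). *)
Definition antithetic n k (s : 'S_n) : 'S_n := (antiperm n k * s)%g.

Lemma antitheticE n k (s : 'S_n) p : antithetic k s p = s (antipos k p).
Proof. by rewrite /antithetic permM permE. Qed.

Definition unif_mean n (R : {set 'S_n}) (f : 'S_n -> rat) : rat :=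
  ((\sum_(s in R) f s) / (#|R|)%:R)%R.

Definition unif_cov n (R : {set 'S_n}) (X Y : 'S_n -> nat) : rat :=
  (unif_mean R (fun s => (X s * Y s)%:R)
   - unif_mean R (fun s => (X s)%:R) * unif_mean R (fun s => (Y s)%:R))%R.

From mathcomp Require Import all_boot all_order all_algebra all_fingroup.
From mathcomp Require Import zify ring.
Import Order.TTheory GRing.Theory Num.Theory.
Set Implicit Arguments. Unset Strict Implicit. Unset Printing Implicit Defensive.

(* Call an item free if it is not one of the fixed top items a_0..a_(k-1).
   Two members s, t of R agree on the relative order of every pair containing
   a fixed item, so only pairs of free items can be discordant; and the
   antithetic operator A_R reverses the positions of all free items, hence
   flips the discordance status of every free pair.  Consequently, for s, t
   in R,   d(A_R s, t) + d(s, t) = c,   the number of free pairs.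

   So Y = c - X on R and Cov(X, Y) = -Var(X).  The variance is positive
   because X is not constant on R: X(sigma0) = 0 while X(A_R sigma0) = c > 0
   as soon as there are two free items (n - k >= 2). *)

Section ComplementaryVariables.
Local Open Scope ring_scope.

Lemma sum_sqr_lt (T : finType) (R : {set T}) (x : T -> rat) s1 s2 :
  s1 \in R -> s2 \in R -> x s1 != x s2 ->
  (\sum_(s in R) x s) ^+ 2 < #|R|%:R * \sum_(s in R) x s ^+ 2.
Proof.
move=> h1 h2 hne.
set N : rat := #|R|%:R; set S1 := \sum_(s in R) x s; set S2 := \sum_(s in R) x s ^+ 2.
have N_gt0 : 0 < N by rewrite ltr0n; apply/card_gt0P; exists s1.
have dev_sum : \sum_(s in R) (N * x s - S1) ^+ 2 = N * (N * S2 - S1 ^+ 2).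
  transitivity (\sum_(s in R) (N ^+ 2 * x s ^+ 2 - 2 * N * S1 * x s + S1 ^+ 2)).
    by apply: eq_bigr => s _; ring.
  rewrite big_split sumrB /= -!mulr_sumr sumr_const -/S1 -/S2 -[S1 *+ _]mulr_natr.
  ring.
have dev_gt0 : 0 < \sum_(s in R) (N * x s - S1) ^+ 2.
  have dev_ge0 : 0 <= \sum_(s in R) (N * x s - S1) ^+ 2.
    by apply: sumr_ge0 => s _; exact: sqr_ge0.
  rewrite lt_def dev_ge0 andbT.
  apply/eqP => /(psumr_eq0P (fun s _ => sqr_ge0 (N * x s - S1))) dev0.
  move: (dev0 s1 h1) (dev0 s2 h2) => /eqP; rewrite sqrf_eq0 subr_eq0 => /eqP e1 /eqP.
  rewrite sqrf_eq0 subr_eq0 -e1 => /eqP /(mulfI (lt0r_neq0 N_gt0)) e2.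
  by rewrite e2 eqxx in hne.
by rewrite -subr_gt0 -(pmulr_rgt0 _ N_gt0) -dev_sum.
Qed.

(* If X + Y is constant on R and X is not constant on R, then under the
   uniform distribution Cov(X, Y) = -Var(X) < 0. *)
Lemma unif_cov_complement n (R : {set 'S_n}) (X Y : 'S_n -> nat) (c : nat) s1 s2 :
  s1 \in R -> s2 \in R -> X s1 != X s2 ->
  {in R, forall s, X s + Y s = c}%N -> unif_cov R X Y < 0.
Proof.
move=> h1 h2 hne hXY.
set N : rat := #|R|%:R.
have N_gt0 : 0 < N by rewrite ltr0n; apply/card_gt0P; exists s1.
set S1 := \sum_(s in R) (X s)%:R : rat; set S2 := \sum_(s in R) (X s)%:R ^+ 2 : rat.
have Y_c s : s \in R -> (Y s)%:R = c%:R - (X s)%:R :> rat.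
  by move=> hs; rewrite -(hXY s hs) natrD addrC addKr.
have sumXY : \sum_(s in R) (X s * Y s)%:R = c%:R * S1 - S2 :> rat.
  rewrite mulr_sumr -sumrB; apply: eq_bigr => s hs.
  by rewrite natrM Y_c //; ring.
have sumY : \sum_(s in R) (Y s)%:R = c%:R * N - S1 :> rat.
  by rewrite (eq_bigr _ Y_c) sumrB sumr_const mulr_natr.
have var_gt0 : S1 ^+ 2 < N * S2.
  by apply: (sum_sqr_lt h1 h2); rewrite eqr_nat.
rewrite /unif_cov /unif_mean sumXY sumY -/S1.
have -> : (c%:R * S1 - S2) / N - S1 / N * ((c%:R * N - S1) / N) =
          (S1 ^+ 2 - N * S2) / N ^+ 2.
  by field; rewrite lt0r_neq0.
by rewrite ltr_pdivrMr ?exprn_gt0 // mul0r subr_lt0.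
Qed.

End ComplementaryVariables.

Definition pos n (s : 'S_n) (x : 'I_n) : nat := (s^-1)%g x.

Lemma pos_lt n (s : 'S_n) x : (pos s x < n)%N.
Proof. exact: ltn_ord. Qed.

Lemma pos_inj n (s : 'S_n) x y : pos s x = pos s y -> x = y.
Proof. by move/val_inj/perm_inj. Qed.

Definition discordant n (s t : 'S_n) (x y : 'I_n) : bool :=
  (((pos s x)%:Z - (pos s y)%:Z) * ((pos t x)%:Z - (pos t y)%:Z) < 0)%R.

Lemma discordantC n (s t : 'S_n) x y : discordant s t x y = discordant s t y x.
Proof. by rewrite /discordant -mulrNN !opprB. Qed.

Definition discordant_pairs n (s t : 'S_n) : {set 'I_n * 'I_n} :=
  [set p : 'I_n * 'I_n | (p.1 < p.2)%N && discordant s t p.1 p.2].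

Lemma kendallE n (s t : 'S_n) : kendall s t = #|discordant_pairs s t|.
Proof. by []. Qed.

(* d(t, t) = 0: every factor product is a square. *)
Lemma kendall_refl n (t : 'S_n) : kendall t t = 0%N.
Proof.
rewrite kendallE; apply/eqP; rewrite cards_eq0; apply/eqP/setP => p.
by rewrite !inE /discordant -expr2 ltNge sqr_ge0 andbF.
Qed.

(* The antithetic position map is an involution; this gives the inverse of
   A_R(s) and thus the positions in A_R(s). *)
Lemma antipos_invol n k (p : 'I_n) : antipos k (antipos k p) = p.
Proof.
apply: val_inj => /=; rewrite !antipos_val; have := ltn_ord p.
case: (ltnP p k) => [-> //|kp pn]; case: ifP; lia.
Qed.

Lemma pos_antithetic n k (s : 'S_n) x :
  pos (antithetic k s) x = if (pos s x < k)%N then pos s x else (n + k - 1 - pos s x)%N.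
Proof.
have antiperm_inv : ((antiperm n k)^-1)%g = antiperm n k.
  apply/permP => q; apply: (@perm_inj _ (antiperm n k)).
  by rewrite permKV !permE antipos_invol.
by rewrite /pos /antithetic invMg permM antiperm_inv permE antipos_val.
Qed.

Section TopK.
Variables (n k : nat) (a : 'I_k -> 'I_n).
Hypothesis k_le_n : (k <= n)%N.

Definition free (x : 'I_n) : bool := [forall i, a i != x].

Lemma nonfreeP x : ~~ free x -> exists i, a i = x.
Proof. by rewrite negb_forall => /existsP [i]; rewrite negbK => /eqP; exists i. Qed.

Lemma topkP (s : 'S_n) : s \in topk a ->
  forall (i : 'I_k) (p : 'I_n), nat_of_ord p = nat_of_ord i -> s p = a i.
Proof.
rewrite inE => /forallP h i p e.
by have /forallP/(_ p)/implyP/(_ (introT eqP e))/eqP := h i.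
Qed.

Lemma pos_fixed (s : 'S_n) i : s \in topk a -> pos s (a i) = i.
Proof.
move=> hs; have hi : (i < n)%N by apply: leq_trans k_le_n.
by rewrite /pos -(topkP hs (p := Ordinal hi) (erefl _)) permK.
Qed.

Lemma pos_free (s : 'S_n) x : s \in topk a -> free x -> (k <= pos s x)%N.
Proof.
move=> hs /forallP hx; case: ltnP => // h.
have := topkP hs (i := Ordinal h) (p := (s^-1)%g x) (erefl _); rewrite permKV => e.
by move: (hx (Ordinal h)); rewrite -e eqxx.
Qed.

(* A_R maps R into itself, since it fixes the first k positions. *)
Lemma topk_antithetic (s : 'S_n) : s \in topk a -> antithetic k s \in topk a.
Proof.
move=> hs; rewrite inE; apply/forallP => i; apply/forallP => p; apply/implyP => /eqP e.
by rewrite antitheticE; apply/eqP/(topkP hs); rewrite antipos_val e ltn_ord.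
Qed.

Lemma not_discordant_fixed (s t : 'S_n) i y : s \in topk a -> t \in topk a ->
  ~~ discordant s t (a i) y.
Proof.
move=> hs ht; rewrite /discordant -leNgt !pos_fixed //.
have := ltn_ord i; case: (boolP (free y)) => [fy|/nonfreeP [j <-]].
  by have := pos_free hs fy; have := pos_free ht fy; nia.
by rewrite !pos_fixed // -expr2 sqr_ge0.
Qed.

Lemma not_discordant_nonfree (s t : 'S_n) x y : s \in topk a -> t \in topk a ->
  ~~ (free x && free y) -> ~~ discordant s t x y.
Proof.
move=> hs ht; rewrite negb_and => /orP [/nonfreeP [i <-]|/nonfreeP [j <-]].
  exact: not_discordant_fixed.
by rewrite discordantC; apply: not_discordant_fixed.
Qed.

(* A_R reverses the positions of the free items, so it flips the discordance
   of every pair of distinct free items. *)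
Lemma discordant_antithetic (s t : 'S_n) x y : s \in topk a ->
  free x -> free y -> x != y ->
  discordant (antithetic k s) t x y = ~~ discordant s t x y.
Proof.
move=> hs fx fy xy; rewrite /discordant !pos_antithetic.
have kx := pos_free hs fx; have ky := pos_free hs fy.
rewrite !ltnNge kx ky /=.
have := pos_lt s x; have := pos_lt s y => ??.
have -> : ((n + k - 1 - pos s x)%N%:Z - (n + k - 1 - pos s y)%N%:Z =
           - ((pos s x)%:Z - (pos s y)%:Z))%R by lia.
have diff_neq0 (u : 'S_n) : ((pos u x)%:Z - (pos u y)%:Z != 0)%R.
  by rewrite subr_eq0 eqz_nat; apply: contra xy => /eqP/pos_inj ->.
by rewrite mulNr oppr_lt0 lt_def mulf_neq0 // -leNgt.
Qed.

Definition free_pairs : {set 'I_n * 'I_n} :=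
  [set p : 'I_n * 'I_n | [&& (p.1 < p.2)%N, free p.1 & free p.2]].

Lemma discordant_pairs_sub (s t : 'S_n) : s \in topk a -> t \in topk a ->
  discordant_pairs s t \subset free_pairs.
Proof.
move=> hs ht; apply/subsetP => [[x y]]; rewrite !inE /= => /andP [-> hd] /=.
by apply: contraLR hd; apply: not_discordant_nonfree.
Qed.

Lemma discordant_pairs_antithetic (s t : 'S_n) : s \in topk a -> t \in topk a ->
  discordant_pairs (antithetic k s) t = free_pairs :\: discordant_pairs s t.
Proof.
move=> hs ht; apply/setP => [[x y]]; rewrite !inE /=.
case: (ltnP x y) => //= xy.
case: (boolP (free x && free y)) => [/andP [fx fy]|nf].
  by rewrite andbT discordant_antithetic //; apply: contraTneq xy => ->; rewrite ltnn.
rewrite andbF; apply: negbTE; apply: not_discordant_nonfree nf => //.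
exact: topk_antithetic.
Qed.

Lemma kendall_antithetic_sum (s t : 'S_n) : s \in topk a -> t \in topk a ->
  (kendall (antithetic k s) t + kendall s t)%N = #|free_pairs|.
Proof.
move=> hs ht; have sub := discordant_pairs_sub hs ht.
rewrite !kendallE discordant_pairs_antithetic // cardsD.
by have /setIidPr -> := sub; rewrite subnK // subset_leq_card.
Qed.

Lemma free_pairs_gt0 (t : 'S_n) : t \in topk a -> (k.+2 <= n)%N -> (0 < #|free_pairs|)%N.
Proof.
move=> ht hn.
have free_low (q : 'I_n) : (k <= q)%N -> free (t q).
  move=> kq; apply: contraTT kq => /nonfreeP [i ei].
  by have := pos_fixed i ht; rewrite ei /pos permK => ->; rewrite -ltnNge.
have hp : (k < n)%N by lia.
have hq : (k.+1 < n)%N by lia.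
set u := t (Ordinal hp); set v := t (Ordinal hq).
have fu : free u by apply: free_low.
have fv : free v by apply: free_low => /=.
have uv : u != v by apply/eqP => /perm_inj/(congr1 val) /=; lia.
apply/card_gt0P; case: (ltngtP u v) => h.
- by exists (u, v); rewrite inE /= h fu fv.
- by exists (v, u); rewrite inE /= h fu fv.
- by rewrite (val_inj h) eqxx in uv.
Qed.

End TopK.

Theorem proposition2 (n k : nat) (a : 'I_k -> 'I_n) (a_inj : injective a)
  (hnk : (2 <= n - k)%N) (sigma0 : 'S_n) (hs0 : sigma0 \in topk a) :
  (unif_cov (topk a) (fun s => kendall s sigma0)
                     (fun s => kendall (antithetic k s) sigma0) < 0)%R.
Proof.
have k_le_n : (k <= n)%N by lia.
have sum_const s : s \in topk a ->
    (kendall s sigma0 + kendall (antithetic k s) sigma0)%N = #|free_pairs a|.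
  by move=> hs; rewrite addnC (kendall_antithetic_sum k_le_n hs hs0).
apply: (unif_cov_complement hs0 (topk_antithetic hs0) _ sum_const).
have := sum_const _ hs0; rewrite kendall_refl add0n => ->.
by rewrite neq_ltn (free_pairs_gt0 k_le_n hs0) //; lia.
Qed.
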